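(* Let $\mathcal R_1,\mathcal R_2\subseteq\mathbb{N}_0^n\times\mathbb{N}_0^n$ be reaction networks on the same set of $n$ species. If $\mathrm{cl}(\mathcal R_1)=\mathrm{cl}(\mathcal R_2)$, then $\mathcal R_1(x)=\mathcal R_2(x)$ for all $x\in\mathbb{N}_0^n$.
   Context: A reaction network (RN) is a (possibly infinite) subset $\mathcal R\subseteq\mathbb{N}_0^n\times\mathbb{N}_0^n$ containing no element $(y,y')$ with $y=y'$; elements $(y,y')$ are reactions $y\to y'$. For $r_1=(y_1,y_1'),\ r_2=(y_2,y_2')$ define $r_1\oplus r_2=(y_1+0\vee(y_2-y_1'),\ y_2'+0\vee(y_1'-y_2))$ ($\vee$ componentwise maximum); it is associative. For $A\subseteq\mathbb{N}_0^n\times\mathbb{N}_0^n$, $\mathrm{cl}(A)$ is the set of all finite $\oplus$-sums of elements of $A$, including the empty sum $(0,0)$. An ordered sequence of reactions $y_1\to y_1',\dots,y_m\to y_m'$ is active on $x\in\mathbb{N}_0^n$ if $x+\sum_{i=1}^{k-1}(y_i'-y_i)\ge y_k$ (componentwise) for all $k$. A state $x$ leads to $x'$ via $\mathcal R$ if there is an ordered sequence of $m\ge0$ reactions of $\mathcal R$ (repetitions allowed) active on $x$ with $x'=x+\sum_{i=1}^m(y_i'-y_i)$. $\mathcal R(x)$ denotes the set of states $x'$ to which $x$ leads via $\mathcal R$. *)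

From mathcomp Require Import all_boot.
Set Implicit Arguments. Unset Strict Implicit. Unset Printing Implicit Defensive.

Definition state (n : nat) := {ffun 'I_n -> nat}.
Definition reaction (n : nat) := (state n * state n)%type.

Definition rset (n : nat) := reaction n -> Prop.

Definition is_RN (n : nat) (R : rset n) : Prop :=
  forall r : reaction n, R r -> r.1 <> r.2.

Definition zero_state (n : nat) : state n := [ffun _ => 0].

(* r1 (+) r2 = (y1 + 0 v (y2 - y1'), y2' + 0 v (y1' - y2));
   on nat, 0 v (a - b) is the truncated subtraction a - b. *)
Definition oplus (n : nat) (r1 r2 : reaction n) : reaction n :=
  ([ffun i => r1.1 i + (r2.1 i - r1.2 i)],
   [ffun i => r2.2 i + (r1.2 i - r2.1 i)]).

Definition cl (n : nat) (A : rset n) : rset n :=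
  fun r => exists rs : seq (reaction n),
    (forall s, s \in rs -> A s) /\
    r = foldr (@oplus n) (zero_state n, zero_state n) rs.

Definition sle (n : nat) (a b : state n) : Prop := forall i, a i <= b i.

(* Firing reaction r on state x (meaningful when r.1 <= x). *)
Definition fire (n : nat) (x : state n) (r : reaction n) : state n :=
  [ffun i => x i - r.1 i + r.2 i].

(* Sequence active on x: x + sum_{i<k}(y_i' - y_i) >= y_k for all k.
   Since these partial sums stay nonnegative, they are computed in nat. *)
Fixpoint active (n : nat) (x : state n) (rs : seq (reaction n)) : Prop :=
  match rs with
  | [::] => True
  | r :: rs' => sle r.1 x /\ active (fire x r) rs'
  end.

(* Resulting state x + sum_i (y_i' - y_i), along an active sequence. *)
Fixpoint final (n : nat) (x : state n) (rs : seq (reaction n)) : state n :=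
  match rs with
  | [::] => x
  | r :: rs' => final (fire x r) rs'
  end.

(* x leads to x' via R; R(x) = {x' | leads R x x'}. *)
Definition leads (n : nat) (R : rset n) (x x' : state n) : Prop :=
  exists rs : seq (reaction n),
    (forall s, s \in rs -> R s) /\ active x rs /\ x' = final x rs.

From mathcomp Require Import all_boot.
From mathcomp Require Import zify.
Set Implicit Arguments. Unset Strict Implicit. Unset Printing Implicit Defensive.

(* The (+)-sum of a sequence of reactions summarizes its whole effect:
   a sequence rs is active on x exactly when the source of its sum
   s = r_1 (+) ... (+) r_m is below x, and then firing rs from x ends at
   the state obtained by firing the single reaction s.  Both facts follow
   by induction on rs from the two-reaction case: firing r and then r'
   is possible iff r (+) r' can fire, with the same result.
   Consequently x leads to x' via R iff some element of cl(R) can fire on x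
   and yields x', so R(x) depends on R only through cl(R), which gives the
   corollary at once. *)

Definition zero_reaction (n : nat) : reaction n := (zero_state n, zero_state n).

Definition rsum (n : nat) (rs : seq (reaction n)) : reaction n :=
  foldr (@oplus n) (zero_reaction n) rs.

Section Firing.
Variable n : nat.
Implicit Types (x : state n) (r s : reaction n).

Lemma fire_zero x : fire x (zero_reaction n) = x.
Proof. by apply/ffunP => i; rewrite !ffunE /=; lia. Qed.

Lemma sle_oplusE x r s :
  sle r.1 x /\ sle s.1 (fire x r) <-> sle (oplus r s).1 x.
Proof.
split.
- by move=> [Hr Hs] i; have := Hs i; have := Hr i; rewrite !ffunE; lia.
- move=> H; split=> i; have := H i; rewrite !ffunE; lia.
Qed.

Lemma fire_oplus x r s :
  sle r.1 x -> sle s.1 (fire x r) -> fire (fire x r) s = fire x (oplus r s).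
Proof.
move=> Hr Hs; apply/ffunP => i.
by have := Hs i; have := Hr i; rewrite !ffunE; lia.
Qed.

Lemma active_rsumE rs x : active x rs <-> sle (rsum rs).1 x.
Proof.
elim: rs x => [|r rs IH] x /=.
  by split=> // _ i; rewrite ffunE.
by rewrite -sle_oplusE IH.
Qed.

Lemma final_rsum rs x : active x rs -> final x rs = fire x (rsum rs).
Proof.
elim: rs x => [|r rs IH] x /=; first by rewrite fire_zero.
move=> [Hr Hrs]; rewrite IH // fire_oplus //.
exact/active_rsumE.
Qed.

Lemma leads_clE (R : rset n) x x' :
  leads R x x' <-> exists r, cl R r /\ sle r.1 x /\ x' = fire x r.
Proof.
split.
- move=> [rs [HR [Hact ->]]].
  exists (rsum rs); split; first by exists rs.
  by split; [apply/active_rsumE | apply: final_rsum].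
- move=> [_ [[rs [HR ->]] [Hs ->]]].
  have Hact : active x rs by apply/active_rsumE.
  by exists rs; split; [|split; last rewrite final_rsum].
Qed.

End Firing.

Theorem corollary3p4 (n : nat) (R1 R2 : rset n) :
  is_RN R1 -> is_RN R2 ->
  (forall r, cl R1 r <-> cl R2 r) ->
  forall x x' : state n, leads R1 x x' <-> leads R2 x x'.
Proof.
move=> _ _ sameCl x x'; rewrite !leads_clE.
by split=> -[r [Hr Hfire]]; exists r; split=> //; apply/sameCl.
Qed.
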